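(* (1) Let $A\in\mathrm{SL}(2,\mathbb R)$ be such that $A\Lambda_q$ contains a horizontal vector $(c,0)^T$ with $0<c\le1$. Then there is a unique point $(a_A,b_A)\in\mathscr T^q$ with $A\Lambda_q=g_{a_A,b_A}\Lambda_q$, and $a_A=c$. (Uniqueness: if $(a,b),(c',d)\in\mathscr T^q$ and $g_{a,b}\Lambda_q=g_{c',d}\Lambda_q$ then $(a,b)=(c',d)$.) (2) For every $(a,b)\in\mathscr T^q$, the set $g_{a,b}\Lambda_q\cap S_1$ is nonempty and contains a vector of smallest positive slope; let $R_q(a,b)>0$ denote this slope. Then $R_q(a,b)$ is the smallest $s>0$ such that $h_sg_{a,b}\Lambda_q$ contains a horizontal vector of length at most $1$, so by (1) there is a unique point $\mathrm{BCZ}_q(a,b)\in\mathscr T^q$ with $h_{R_q(a,b)}g_{a,b}\Lambda_q=g_{\mathrm{BCZ}_q(a,b)}\Lambda_q$. (3) The sets $\mathscr T_i^q=\{(a,b)\in\mathscr T^q:(a,b)^T\cdot\mathfrak w_{i-1}^q>1,\ (a,b)^T\cdot\mathfrak w_i^q\le1\}$, $i=2,3,\dots,q-1$, form a partition of $\mathscr T^q$. If $(a,b)\in\mathscr T_i^q$, then $g_{a,b}\mathfrak w_i^q$ is the vector of least positive slope in $g_{a,b}\Lambda_q\cap S_1$, $$R_q(a,b)=\frac{y_i^q}{a\,\big((a,b)^T\cdot\mathfrak w_i^q\big)},$$ and $$\mathrm{BCZ}_q(a,b)=\Big((a,b)^T\cdot\mathfrak w_i^q,\ (a,b)^T\cdot\mathfrak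 w_{i+1}^q+k_i^q(a,b)\,\lambda_q\,(a,b)^T\cdot\mathfrak w_i^q\Big),\quad k_i^q(a,b)=\left\lfloor\frac{1-(a,b)^T\cdot\mathfrak w_{i+1}^q}{\lambda_q\,(a,b)^T\cdot\mathfrak w_i^q}\right\rfloor.$$
   Context: Fix an integer $q\ge3$, let $\lambda_q=2\cos(\pi/q)$, and let $G_q\subset \mathrm{SL}(2,\mathbb R)$ be the Hecke triangle group generated by $S=\begin{pmatrix}0&-1\\1&0\end{pmatrix}$ and $T_q=\begin{pmatrix}1&\lambda_q\\0&1\end{pmatrix}$, acting linearly on $\mathbb R^2$. Set $\Lambda_q=G_q(1,0)^T$ and $A\Lambda_q=\{A\mathbf v:\mathbf v\in\Lambda_q\}$. Let $U_q=T_qS=\begin{pmatrix}\lambda_q&-1\\1&0\end{pmatrix}$ and $\mathfrak w_i^q=(x_i^q,y_i^q)^T=U_q^i(1,0)^T$. The dot product is the standard one. Matrices: $h_s=\begin{pmatrix}1&0\\-s&1\end{pmatrix}$ ($s\in\mathbb R$), $g_{a,b}=\begin{pmatrix}a&b\\0&a^{-1}\end{pmatrix}$ ($a>0,b\in\mathbb R$); for $(a,b)$ a point, $g_{(a,b)}$ means $g_{a,b}$. For $\tau>0$, $S_\tau=\{(x,y)^T\in\mathbb R^2:0<x\le\tau\}$ is the vertical strip. The slope of $(x,y)^T$ with $x\ne0$ is $y/x$. The $G_q$-Farey triangle is $\mathscr T^q=\{(a,b)\in\mathbb R^2:0<a\le1,\ 1-\lambda_qa<b\le1\}$. *)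

From Stdlib Require Import Reals Lra Lia ClassicalEpsilon.
Open Scope R_scope.

Record mat := Mat { m11 : R; m12 : R; m21 : R; m22 : R }.
Definition vec := (R * R)%type.

Definition mmul (A B : mat) : mat :=
  Mat (m11 A * m11 B + m12 A * m21 B) (m11 A * m12 B + m12 A * m22 B)
      (m21 A * m11 B + m22 A * m21 B) (m21 A * m12 B + m22 A * m22 B).
Definition mapp (A : mat) (v : vec) : vec :=
  (m11 A * fst v + m12 A * snd v, m21 A * fst v + m22 A * snd v).
Definition det (A : mat) : R := m11 A * m22 A - m12 A * m21 A.
Definition Imat : mat := Mat 1 0 0 1.

Definition lam (q : nat) : R := 2 * cos (PI / INR q).

Definition Smat : mat := Mat 0 (-1) 1 0.
Definition Sinv : mat := Mat 0 1 (-1) 0.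
Definition Tmat (q : nat) : mat := Mat 1 (lam q) 0 1.
Definition Tinv (q : nat) : mat := Mat 1 (- lam q) 0 1.

Inductive inG (q : nat) : mat -> Prop :=
| G_id : inG q Imat
| G_S  : forall M, inG q M -> inG q (mmul Smat M)
| G_Si : forall M, inG q M -> inG q (mmul Sinv M)
| G_T  : forall M, inG q M -> inG q (mmul (Tmat q) M)
| G_Ti : forall M, inG q M -> inG q (mmul (Tinv q) M).

Definition Lam (q : nat) (v : vec) : Prop :=
  exists M, inG q M /\ v = mapp M (1, 0).
Definition ALam (q : nat) (A : mat) (v : vec) : Prop :=
  exists u, Lam q u /\ v = mapp A u.
Definition same_lattice (q : nat) (A B : mat) : Prop :=
  forall v, ALam q A v <-> ALam q B v.

Definition hmat (s : R) : mat := Mat 1 0 (- s) 1.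
Definition gmat (a b : R) : mat := Mat a b 0 (/ a).

Definition Umat (q : nat) : mat := mmul (Tmat q) Smat.
Fixpoint mpow (A : mat) (n : nat) : mat :=
  match n with O => Imat | S n' => mmul A (mpow A n') end.
Definition w (q i : nat) : vec := mapp (mpow (Umat q) i) (1, 0).

Definition dot (u v : vec) : R := fst u * fst v + snd u * snd v.

Definition inT (q : nat) (p : vec) : Prop :=
  0 < fst p <= 1 /\ 1 - lam q * fst p < snd p <= 1.

Definition strip (tau : R) (v : vec) : Prop := 0 < fst v <= tau.
Definition slope (v : vec) : R := snd v / fst v.

Definition is_min_slope (q : nat) (a b r : R) : Prop :=
  exists v, ALam q (gmat a b) v /\ strip 1 v /\ 0 < slope v /\ slope v = r /\
    forall u, ALam q (gmat a b) u -> strip 1 u -> 0 < slope u -> r <= slope u.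

Definition Rq (q : nat) (a b : R) : R :=
  epsilon (inhabits 0) (is_min_slope q a b).
Definition BCZ (q : nat) (a b : R) : vec :=
  epsilon (inhabits (0, 0)) (fun p => inT q p /\
    same_lattice q (mmul (hmat (Rq q a b)) (gmat a b)) (gmat (fst p) (snd p))).

Definition has_short_horizontal (q : nat) (A : mat) : Prop :=
  exists x, 0 < Rabs x <= 1 /\ ALam q A (x, 0).

Definition inTi (q i : nat) (p : vec) : Prop :=
  inT q p /\ dot p (w q (i - 1)) > 1 /\ dot p (w q i) <= 1.

(* With [Y n = sin (n pi/q) / sin (pi/q)] one has [w_n = (Y_(n+1), Y_n)] and
   [U^q = -1].  Following the orbit of [(1,0)] under [S] and [U] shows that, up
   to sign, every vector of [Lam_q] is some [w_r], a combination
   [al w_m + be w_(m+1)] with [al, be >= 1], or a second-quadrant vector with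
   both coordinates of size at least 1.  So the coordinates of lattice vectors
   are 0 or of size at least 1 and the only horizontal ones are [+-(1,0)]; this
   forces the Farey representative: [a] is the length of the short horizontal
   vector and [b] is determined modulo [lam_q a] by translation with [T_q].
   On [T_i], the three-term identity for [Y] makes [k |-> (a,b).w_k] concave
   enough to show that [g_(a,b) w_i] has least positive slope; then
   [h_R g_(a,b) U^i] is upper triangular with corner [(a,b).w_i], and a
   power of [T_q] moves it into the Farey triangle, giving [BCZ_q(a,b)]. *)

From Stdlib Require Import Reals Lra Lia ClassicalEpsilon.
Open Scope R_scope.

(** * Matrices and the Hecke group *)

Definition vneg (v : vec) : vec := (- fst v, - snd v).
Definition minv (M : mat) : mat := Mat (m22 M) (- m12 M) (- m21 M) (m11 M).
Definition Tpow (q : nat) (n : Z) : mat := Mat 1 (IZR n * lam q) 0 1.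

Ltac mat_unfold :=
  unfold Umat; unfold mapp, mmul, det, minv, vneg, Imat, Smat, Sinv, Tmat, Tinv, Tpow, hmat, gmat;
  cbn [fst snd m11 m12 m21 m22].

Lemma mat_ext (A B : mat) :
  m11 A = m11 B -> m12 A = m12 B -> m21 A = m21 B -> m22 A = m22 B -> A = B.
Proof. destruct A, B; simpl; intros; subst; reflexivity. Qed.

Lemma mmul_assoc A B C : mmul A (mmul B C) = mmul (mmul A B) C.
Proof. apply mat_ext; mat_unfold; ring. Qed.

Lemma mmul_1l A : mmul Imat A = A.
Proof. destruct A; apply mat_ext; mat_unfold; ring. Qed.

Lemma mmul_1r A : mmul A Imat = A.
Proof. destruct A; apply mat_ext; mat_unfold; ring. Qed.

Lemma mapp_mmul A B v : mapp (mmul A B) v = mapp A (mapp B v).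
Proof. mat_unfold; f_equal; ring. Qed.

Lemma mapp_1 v : mapp Imat v = v.
Proof. destruct v; mat_unfold; f_equal; ring. Qed.

Lemma mapp_vneg M v : mapp M (vneg v) = vneg (mapp M v).
Proof. mat_unfold; f_equal; ring. Qed.

Lemma vnegK v : vneg (vneg v) = v.
Proof. destruct v; mat_unfold; f_equal; ring. Qed.

Lemma mapp_SS v : mapp Smat (mapp Smat v) = vneg v.
Proof. mat_unfold; f_equal; ring. Qed.

Lemma det_mmul A B : det (mmul A B) = det A * det B.
Proof. mat_unfold; ring. Qed.

Lemma minv_mmul A B : minv (mmul A B) = mmul (minv B) (minv A).
Proof. apply mat_ext; mat_unfold; ring. Qed.

Lemma mapp_minv M u : det M = 1 -> mapp M (mapp (minv M) u) = u.
Proof.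
  intros HM; unfold det in HM; destruct u as [x y]; mat_unfold; f_equal.
  - transitivity ((m11 M * m22 M - m12 M * m21 M) * x); [ring | rewrite HM; ring].
  - transitivity ((m11 M * m22 M - m12 M * m21 M) * y); [ring | rewrite HM; ring].
Qed.

Lemma gmat_of_det1 B : det B = 1 -> m21 B = 0 -> B = gmat (m11 B) (m12 B).
Proof.
  unfold det; intros HB H21; rewrite H21 in HB.
  assert (H11 : m11 B <> 0) by (intro E; rewrite E in HB; lra).
  apply mat_ext; mat_unfold; auto. field_simplify_eq; lra.
Qed.

Lemma gmat_Tpow q c e n : mmul (gmat c e) (Tpow q n) = gmat c (e + IZR n * lam q * c).
Proof. apply mat_ext; mat_unfold; ring. Qed.

Lemma mapp_gmat a b u : mapp (gmat a b) u = (dot (a, b) u, / a * snd u).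
Proof. unfold dot; mat_unfold; f_equal; ring. Qed.

Lemma slope_le_cross u v :
  0 < fst u -> 0 < fst v -> snd u * fst v <= snd v * fst u -> slope u <= slope v.
Proof.
  intros Hu Hv H; unfold slope.
  replace (snd u / fst u) with ((snd u * fst v) * / (fst u * fst v)) by (field; lra).
  replace (snd v / fst v) with ((snd v * fst u) * / (fst u * fst v)) by (field; lra).
  apply Rmult_le_compat_r; auto. left; apply Rinv_0_lt_compat; nra.
Qed.

Lemma inG_mmul q M N : inG q M -> inG q N -> inG q (mmul M N).
Proof.
  intros HM HN; induction HM; rewrite ?mmul_1l; auto;
    rewrite <- mmul_assoc; constructor; auto.
Qed.

Lemma inG_det q M : inG q M -> det M = 1.
Proof. induction 1; rewrite ?det_mmul, ?IHinG; mat_unfold; ring. Qed.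

Lemma inG_S q : inG q Smat. Proof. rewrite <- (mmul_1r Smat); repeat constructor. Qed.
Lemma inG_Sinv q : inG q Sinv. Proof. rewrite <- (mmul_1r Sinv); repeat constructor. Qed.
Lemma inG_T q : inG q (Tmat q). Proof. rewrite <- (mmul_1r (Tmat q)); repeat constructor. Qed.
Lemma inG_Tinv q : inG q (Tinv q). Proof. rewrite <- (mmul_1r (Tinv q)); repeat constructor. Qed.

Lemma inG_minv q M : inG q M -> inG q (minv M).
Proof.
  induction 1.
  - replace (minv Imat) with Imat by (apply mat_ext; mat_unfold; ring); constructor.
  - rewrite minv_mmul; apply inG_mmul; auto.
    replace (minv Smat) with Sinv by (apply mat_ext; mat_unfold; ring); apply inG_Sinv.
  - rewrite minv_mmul; apply inG_mmul; auto.
    replace (minv Sinv) with Smat by (apply mat_ext; mat_unfold; ring); apply inG_S.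
  - rewrite minv_mmul; apply inG_mmul; auto.
    replace (minv (Tmat q)) with (Tinv q) by (apply mat_ext; mat_unfold; ring); apply inG_Tinv.
  - rewrite minv_mmul; apply inG_mmul; auto.
    replace (minv (Tinv q)) with (Tmat q) by (apply mat_ext; mat_unfold; ring); apply inG_T.
Qed.

Lemma inG_Tpow q n : inG q (Tpow q n).
Proof.
  induction n using Z.peano_ind.
  - replace (Tpow q 0) with Imat by (apply mat_ext; mat_unfold; ring); constructor.
  - replace (Tpow q (Z.succ n)) with (mmul (Tmat q) (Tpow q n))
      by (apply mat_ext; mat_unfold; rewrite ?succ_IZR; ring).
    now constructor.
  - replace (Tpow q (Z.pred n)) with (mmul (Tinv q) (Tpow q n))
      by (apply mat_ext; mat_unfold; unfold Z.pred; rewrite ?plus_IZR; ring).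
    now constructor.
Qed.

Lemma inG_Upow q n : inG q (mpow (Umat q) n).
Proof.
  induction n; simpl; [constructor |].
  apply inG_mmul; auto; apply inG_mmul; [apply inG_T | apply inG_S].
Qed.

Lemma Lam_mapp q M u : inG q M -> Lam q u -> Lam q (mapp M u).
Proof.
  intros HM [N [HN ->]]; exists (mmul M N); split;
    [apply inG_mmul | rewrite mapp_mmul]; auto.
Qed.

Lemma Lam_e1 q : Lam q (1, 0).
Proof. exists Imat; split; [constructor | now rewrite mapp_1]. Qed.

Lemma Lam_w q n : Lam q (w q n).
Proof. exists (mpow (Umat q) n); split; [apply inG_Upow | reflexivity]. Qed.

Lemma Lam_S q v : Lam q v -> Lam q (mapp Smat v).
Proof. apply Lam_mapp, inG_S. Qed.

Lemma Lam_vneg q v : Lam q v -> Lam q (vneg v).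
Proof. intros H; rewrite <- mapp_SS; now apply Lam_S, Lam_S. Qed.

Lemma same_lattice_mmul_r q A M : inG q M -> same_lattice q A (mmul A M).
Proof.
  intros HM v; split.
  - intros [u [Hu ->]]; exists (mapp (minv M) u); split.
    + apply Lam_mapp; auto; apply inG_minv; auto.
    + rewrite mapp_mmul, mapp_minv; auto; apply (inG_det q); auto.
  - intros [u [Hu ->]]; exists (mapp M u); split;
      [apply Lam_mapp | rewrite mapp_mmul]; auto.
Qed.

Lemma same_lattice_sym q A B : same_lattice q A B -> same_lattice q B A.
Proof. intros H v; split; apply H. Qed.

Lemma same_lattice_trans q A B C :
  same_lattice q A B -> same_lattice q B C -> same_lattice q A C.
Proof. intros H1 H2 v; split; intro; [apply H2, H1 | apply H1, H2]; auto. Qed.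

Lemma same_lattice_gmat_shift q c e n :
  same_lattice q (gmat c e) (gmat c (e + IZR n * lam q * c)).
Proof. rewrite <- gmat_Tpow; apply same_lattice_mmul_r, inG_Tpow. Qed.

(** * The sequence [Y] *)

Definition th (q : nat) : R := PI / INR q.

Definition Y (q n : nat) : R := sin (INR n * th q) / sin (th q).

Section Chebyshev.
Variable q : nat.
Hypothesis hq : (3 <= q)%nat.

Lemma INR_q_ge3 : 3 <= INR q.
Proof. replace 3 with (INR 3) by (simpl; ring); apply le_INR; auto. Qed.

Lemma th_pos : 0 < th q.
Proof. pose proof INR_q_ge3; pose proof PI_RGT_0; apply Rdiv_lt_0_compat; lra. Qed.

Lemma th_le : th q <= PI / 3.
Proof.
  pose proof INR_q_ge3; pose proof PI_RGT_0; unfold th.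
  apply Rmult_le_compat_l; [lra | apply Rinv_le_contravar; lra].
Qed.

Lemma q_th : INR q * th q = PI.
Proof. pose proof INR_q_ge3; unfold th; field; lra. Qed.

Lemma sin_th_pos : 0 < sin (th q).
Proof. pose proof th_pos; pose proof th_le; pose proof PI_RGT_0; apply sin_gt_0; lra. Qed.

Lemma lam_pos : 0 < lam q.
Proof.
  pose proof th_pos; pose proof th_le; pose proof PI_RGT_0.
  assert (0 < cos (th q)) by (apply cos_gt_0; lra); unfold lam; fold (th q); lra.
Qed.

Lemma lam_lt2 : lam q < 2.
Proof.
  pose proof sin_th_pos; pose proof (sin2_cos2 (th q)); pose proof (COS_bound (th q)).
  unfold Rsqr in *; unfold lam; fold (th q); nra.
Qed.

Lemma Y0 : Y q 0 = 0.
Proof. unfold Y; simpl; rewrite Rmult_0_l, sin_0; unfold Rdiv; ring. Qed.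

Lemma Y1 : Y q 1 = 1.
Proof. unfold Y; simpl; rewrite Rmult_1_l; field; pose proof sin_th_pos; lra. Qed.

Lemma Y_rec n : Y q (S (S n)) = lam q * Y q (S n) - Y q n.
Proof.
  pose proof sin_th_pos; unfold Y, lam; fold (th q); rewrite !S_INR.
  replace ((INR n + 1 + 1) * th q) with ((INR n + 1) * th q + th q) by ring.
  replace (INR n * th q) with ((INR n + 1) * th q - th q) by ring.
  rewrite sin_plus, sin_minus; field; lra.
Qed.

Lemma Y_q : Y q q = 0.
Proof. unfold Y; rewrite q_th, sin_PI; unfold Rdiv; ring. Qed.

Lemma Y_q1 : Y q (q - 1) = 1.
Proof.
  unfold Y; rewrite minus_INR by lia; simpl INR.
  replace ((INR q - 1) * th q) with (PI - th q) by (rewrite <- q_th; ring).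
  rewrite sin_PI_x; field; pose proof sin_th_pos; lra.
Qed.

Lemma Y_q2 : Y q (q - 2) = lam q.
Proof.
  pose proof (Y_rec (q - 2)) as E.
  replace (S (S (q - 2))) with q in E by lia; replace (S (q - 2)) with (q - 1)%nat in E by lia.
  rewrite Y_q, Y_q1 in E; lra.
Qed.

Lemma sin_nth_nonneg n : (n <= q)%nat -> 0 <= sin (INR n * th q).
Proof.
  intros Hn; pose proof th_pos; pose proof (pos_INR n); apply sin_ge_0; [nra |].
  rewrite <- q_th; apply Rmult_le_compat_r; [lra | apply le_INR; auto].
Qed.

Lemma Y_nonneg n : (n <= q)%nat -> 0 <= Y q n.
Proof.
  intros Hn; pose proof sin_th_pos; unfold Y, Rdiv.
  apply Rmult_le_pos; [apply sin_nth_nonneg; auto | left; apply Rinv_0_lt_compat; auto].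
Qed.

Lemma Y_ge1 n : (1 <= n <= q - 1)%nat -> 1 <= Y q n.
Proof.
  intros Hn; pose proof sin_th_pos; pose proof th_pos; pose proof th_le; pose proof PI_RGT_0.
  pose proof q_th.
  assert (Hn1 : 1 <= INR n) by (apply (le_INR 1); lia).
  assert (Hn2 : INR n <= INR q - 1)
    by (replace (INR q - 1) with (INR (q - 1)) by (rewrite minus_INR by lia; simpl; ring);
        apply le_INR; lia).
  unfold Y; apply (Rmult_le_reg_r (sin (th q))); auto.
  unfold Rdiv; rewrite Rmult_assoc, Rinv_l, Rmult_1_l, Rmult_1_r by lra.
  destruct (Rle_dec (INR n * th q) (PI / 2)).
  - apply sin_incr_1; nra.
  - rewrite <- (sin_PI_x (INR n * th q)); apply sin_incr_1; nra.
Qed.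

Lemma Y_subadd m n : (m + n <= q)%nat -> Y q (m + n) <= Y q m + Y q n.
Proof.
  intros Hmn; pose proof sin_th_pos.
  pose proof (sin_nth_nonneg m ltac:(lia)); pose proof (sin_nth_nonneg n ltac:(lia)).
  pose proof (COS_bound (INR m * th q)); pose proof (COS_bound (INR n * th q)).
  unfold Y, Rdiv; rewrite plus_INR, Rmult_plus_distr_r, sin_plus, <- Rmult_plus_distr_r.
  apply Rmult_le_compat_r; [left; apply Rinv_0_lt_compat; auto | nra].
Qed.

(* Three-term identity [sin t sin (t2 - t1) = sin t1 sin (t2 - t) + sin t2 sin (t - t1)]. *)
Lemma Y_interp c l k m : (l <= k <= m)%nat ->
  Y q (k + c) * Y q (m - l) = Y q (l + c) * Y q (m - k) + Y q (m + c) * Y q (k - l).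
Proof.
  intros H; pose proof sin_th_pos; unfold Y; rewrite !plus_INR, !minus_INR by lia.
  set (t := th q) in *.
  replace ((INR m - INR l) * t) with ((INR m + INR c) * t - (INR l + INR c) * t) by ring.
  replace ((INR m - INR k) * t) with ((INR m + INR c) * t - (INR k + INR c) * t) by ring.
  replace ((INR k - INR l) * t) with ((INR k + INR c) * t - (INR l + INR c) * t) by ring.
  rewrite !sin_minus; field; lra.
Qed.

Lemma Upow_S n :
  mpow (Umat q) (S n) = Mat (Y q (S (S n))) (- Y q (S n)) (Y q (S n)) (- Y q n).
Proof.
  induction n.
  - rewrite Y_rec, Y1, Y0; apply mat_ext; simpl; mat_unfold; ring.
  - change (mpow (Umat q) (S (S n))) with (mmul (Umat q) (mpow (Umat q) (S n))).
    rewrite IHn, (Y_rec (S n)); apply mat_ext; mat_unfold; rewrite ?(Y_rec n); ring.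
Qed.

Lemma mapp_Upow_S n x y : mapp (mpow (Umat q) (S n)) (x, y) =
  (Y q (S (S n)) * x - Y q (S n) * y, Y q (S n) * x - Y q n * y).
Proof. rewrite Upow_S; mat_unfold; f_equal; ring. Qed.

Lemma w_eq n : w q n = (Y q (S n), Y q n).
Proof.
  unfold w; destruct n.
  - simpl; rewrite mapp_1, Y1, Y0; auto.
  - rewrite mapp_Upow_S; f_equal; ring.
Qed.

Lemma w_0 : w q 0 = (1, 0).
Proof. rewrite w_eq, Y0, Y1; auto. Qed.

Lemma w_q1 : w q (q - 1) = (0, 1).
Proof. rewrite w_eq; replace (S (q - 1)) with q by lia; rewrite Y_q, Y_q1; auto. Qed.

Lemma mapp_Upow_q v : mapp (mpow (Umat q) q) v = vneg v.
Proof.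
  destruct v as [x y].
  replace (mpow (Umat q) q) with (mpow (Umat q) (S (q - 1))) by (f_equal; lia).
  rewrite mapp_Upow_S, Y_rec; replace (S (q - 1)) with q by lia.
  rewrite Y_q, Y_q1; mat_unfold; f_equal; ring.
Qed.

End Chebyshev.

(** * Shape of the vectors of [Lam_q] *)

Inductive quad2_orbit (q : nat) : vec -> Prop :=
| quad2_base j : (1 <= j <= q - 2)%nat -> quad2_orbit q (mapp Smat (w q j))
| quad2_step u k : quad2_orbit q u -> (1 <= k <= q - 1)%nat ->
    quad2_orbit q (vneg (mapp Smat (mapp (mpow (Umat q) k) u))).

(* An invariant of the action of [S] and [U] on [Lam q]: the witnesses [u]
   generated by [quad2_orbit] stay away from the axes ([quad2_orbit_bound]). *)
Definition orbit_form (q : nat) (v : vec) : Prop :=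
  exists r u, (r < q)%nat /\ (u = (1, 0) \/ quad2_orbit q u) /\
    (v = mapp (mpow (Umat q) r) u \/ v = vneg (mapp (mpow (Umat q) r) u)).

Definition basic_shape (q : nat) (v : vec) : Prop :=
  (exists r, (r < q)%nat /\ v = (Y q (S r), Y q r)) \/
  (exists m al be, (m + 2 <= q)%nat /\ 1 <= al /\ 1 <= be /\
     v = (al * Y q (S m) + be * Y q (S (S m)), al * Y q m + be * Y q (S m))) \/
  (fst v <= -1 /\ 1 <= snd v).

Section Orbits.
Variable q : nat.
Hypothesis hq : (3 <= q)%nat.

Lemma quad2_orbit_bound u : quad2_orbit q u -> fst u <= -1 /\ 1 <= snd u.
Proof.
  induction 1 as [j Hj | [x y] k _ [Hx Hy] Hk].
  - rewrite w_eq by auto; mat_unfold.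
    pose proof (Y_ge1 q hq j ltac:(lia)); pose proof (Y_ge1 q hq (S j) ltac:(lia)); lra.
  - destruct k as [|k]; [lia |]; rewrite mapp_Upow_S by auto; mat_unfold; cbn in Hx, Hy.
    pose proof (Y_ge1 q hq (S k) ltac:(lia)).
    pose proof (Y_nonneg q hq k ltac:(lia)); pose proof (Y_nonneg q hq (S (S k)) ltac:(lia)).
    split; nra.
Qed.

Lemma orbit_form_intro r u : (r < q)%nat -> (u = (1, 0) \/ quad2_orbit q u) ->
  orbit_form q (mapp (mpow (Umat q) r) u).
Proof. intros; exists r, u; auto. Qed.

Lemma orbit_form_vneg v : orbit_form q v -> orbit_form q (vneg v).
Proof.
  intros [r [u [Hr [Hu [-> | ->]]]]]; exists r, u; rewrite ?vnegK; auto.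
Qed.

Lemma orbit_form_w r : (r < q)%nat -> orbit_form q (w q r).
Proof. intros; apply orbit_form_intro; auto. Qed.

Lemma orbit_form_quad2 u : quad2_orbit q u -> orbit_form q u.
Proof. intros Hu; exists O, u; simpl; rewrite mapp_1; repeat split; auto; lia. Qed.

Lemma orbit_form_U v : orbit_form q v -> orbit_form q (mapp (Umat q) v).
Proof.
  intros [r [u [Hr [Hu Hv]]]].
  assert (E : mapp (Umat q) (mapp (mpow (Umat q) r) u) = mapp (mpow (Umat q) (S r)) u)
    by (simpl; rewrite mapp_mmul; auto).
  destruct (Nat.eq_dec (S r) q) as [Eq | Ne].
  - rewrite Eq, mapp_Upow_q in E by auto.
    exists O, u; simpl; rewrite mapp_1; repeat split; auto; try lia.
    destruct Hv as [-> | ->]; [right | left]; rewrite ?mapp_vneg, E, ?vnegK; auto.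
  - exists (S r), u; repeat split; auto; try lia.
    destruct Hv as [-> | ->]; [left | right]; rewrite ?mapp_vneg, E; auto.
Qed.

Lemma orbit_form_Upow n v : orbit_form q v -> orbit_form q (mapp (mpow (Umat q) n) v).
Proof.
  induction n; intros Hv; simpl; [rewrite mapp_1 | rewrite mapp_mmul; apply orbit_form_U]; auto.
Qed.

Lemma orbit_form_S_w r : (r < q)%nat -> orbit_form q (mapp Smat (w q r)).
Proof.
  intros Hr; destruct (Nat.eq_dec r 0) as [-> | Hr0].
  - replace (mapp Smat (w q 0)) with (w q (q - 1)); [apply orbit_form_w; lia |].
    rewrite w_0, w_q1 by auto; mat_unfold; f_equal; ring.
  - destruct (Nat.eq_dec r (q - 1)) as [-> | Hr1].
    + replace (mapp Smat (w q (q - 1))) with (vneg (w q 0));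
        [apply orbit_form_vneg, orbit_form_w; lia |].
      rewrite w_0, w_q1 by auto; mat_unfold; f_equal; ring.
    + apply orbit_form_quad2; constructor; lia.
Qed.

Lemma orbit_form_S_quad2 u : quad2_orbit q u -> orbit_form q (mapp Smat u).
Proof.
  induction 1 as [j Hj | u k Hu _ Hk].
  - rewrite mapp_SS; apply orbit_form_vneg, orbit_form_w; lia.
  - rewrite mapp_vneg, mapp_SS, vnegK; apply orbit_form_intro; auto; lia.
Qed.

Lemma orbit_form_S v : orbit_form q v -> orbit_form q (mapp Smat v).
Proof.
  assert (K : forall r u, (r < q)%nat -> (u = (1, 0) \/ quad2_orbit q u) ->
            orbit_form q (mapp Smat (mapp (mpow (Umat q) r) u))).
  { intros r u Hr [-> | Hu]; [apply orbit_form_S_w; auto |].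
    destruct r as [|r].
    - simpl; rewrite mapp_1; apply orbit_form_S_quad2; auto.
    - rewrite <- (vnegK (mapp Smat _)); apply orbit_form_vneg, orbit_form_quad2.
      constructor; auto; lia. }
  intros [r [u [Hr [Hu [-> | ->]]]]]; rewrite ?mapp_vneg; [| apply orbit_form_vneg]; auto.
Qed.

Lemma mapp_Tmat v : mapp (Tmat q) v = vneg (mapp (Umat q) (mapp Smat v)).
Proof. mat_unfold; f_equal; ring. Qed.

(* [U^-1 = -U^(q-1)] *)
Lemma mapp_Tinv v : mapp (Tinv q) v = vneg (mapp Smat (mapp (mpow (Umat q) (q - 1)) v)).
Proof.
  destruct v as [x y]; replace (q - 1)%nat with (S (q - 2)) by lia.
  rewrite mapp_Upow_S by auto; replace (S (S (q - 2))) with q by lia.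
  replace (S (q - 2)) with (q - 1)%nat by lia; rewrite Y_q, Y_q1, Y_q2 by auto.
  mat_unfold; f_equal; ring.
Qed.

Lemma orbit_form_inG M v : inG q M -> orbit_form q v -> orbit_form q (mapp M v).
Proof.
  intros HM; revert v; induction HM; intros v Hv; rewrite ?mapp_1, ?mapp_mmul; auto.
  - apply orbit_form_S; auto.
  - replace (mapp Sinv (mapp M v)) with (vneg (mapp Smat (mapp M v)))
      by (mat_unfold; f_equal; ring).
    apply orbit_form_vneg, orbit_form_S; auto.
  - rewrite mapp_Tmat; apply orbit_form_vneg, orbit_form_U, orbit_form_S; auto.
  - rewrite mapp_Tinv; apply orbit_form_vneg, orbit_form_S, orbit_form_Upow; auto.
Qed.

Lemma Lam_basic_shape v : Lam q v -> basic_shape q v \/ basic_shape q (vneg v).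
Proof.
  intros [M [HM ->]].
  assert (He1 : orbit_form q (1, 0))
    by (rewrite <- (mapp_1 (1, 0)); apply (orbit_form_intro 0); auto; lia).
  destruct (orbit_form_inG M (1, 0) HM He1) as [r [u [Hr [Hu Hv]]]].
  generalize dependent (mapp M (1, 0)); intros v Hv.
  assert (Sh : basic_shape q (mapp (mpow (Umat q) r) u) \/
               basic_shape q (vneg (mapp (mpow (Umat q) r) u))).
  { destruct Hu as [-> | Hu].
    - left; left; exists r; split; auto; apply w_eq; auto.
    - destruct u as [x y]; destruct (quad2_orbit_bound _ Hu) as [Hx Hy]; cbn in Hx, Hy.
      destruct r as [|m].
      + left; right; right; change (mpow (Umat q) 0) with Imat; rewrite mapp_1; auto.
      + right; right; left; exists m, y, (- x); repeat split; try lia; try lra.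
        rewrite mapp_Upow_S by auto; mat_unfold; f_equal; ring. }
  destruct Hv as [-> | ->]; rewrite ?vnegK; tauto.
Qed.

End Orbits.

(** * Discreteness and Farey representatives *)

Definition farey_shift (q : nat) (c e : R) : R :=
  e + IZR (Int_part ((1 - e) / (lam q * c))) * lam q * c.

Lemma Int_part_shift_bounds h e :
  0 < h -> 1 - h < e + IZR (Int_part ((1 - e) / h)) * h <= 1.
Proof.
  intros Hh; destruct (base_Int_part ((1 - e) / h)) as [H1 H2].
  set (k := IZR (Int_part ((1 - e) / h))) in *.
  assert (E : (1 - e) / h * h = 1 - e) by (field; lra).
  assert (k * h <= (1 - e) / h * h) by (apply Rmult_le_compat_r; lra).
  assert (((1 - e) / h - 1) * h < k * h) by (apply Rmult_lt_compat_r; lra).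
  split; nra.
Qed.

Section Farey.
Variable q : nat.
Hypothesis hq : (3 <= q)%nat.

Lemma basic_shape_snd v : basic_shape q v -> snd v = 0 \/ 1 <= snd v.
Proof.
  intros [[r [Hr ->]] | [[m [al [be [Hm [Hal [Hbe ->]]]]]] | [_ Hy]]]; cbn; auto.
  - destruct r as [|r]; [left; apply Y0; auto | right; apply Y_ge1; auto; lia].
  - pose proof (Y_nonneg q hq m ltac:(lia)); pose proof (Y_ge1 q hq (S m) ltac:(lia)).
    right; nra.
Qed.

Lemma Lam_snd_discrete v : Lam q v -> snd v = 0 \/ 1 <= Rabs (snd v).
Proof.
  intros Hv; destruct (Lam_basic_shape q hq v Hv) as [Sh | Sh];
    destruct (basic_shape_snd _ Sh) as [H | H]; cbn in H.
  - auto.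
  - right; rewrite Rabs_right; lra.
  - left; lra.
  - right; rewrite Rabs_left; lra.
Qed.

Lemma Lam_fst_discrete v : Lam q v -> fst v = 0 \/ 1 <= Rabs (fst v).
Proof.
  intros Hv; apply Lam_S, Lam_snd_discrete in Hv.
  destruct v as [x y]; mat_unfold; cbn in Hv.
  replace (1 * x + 0 * y) with x in Hv by ring; auto.
Qed.

Lemma basic_shape_horizontal x : basic_shape q (x, 0) -> x = 1.
Proof.
  intros [[r [Hr E]] | [[m [al [be [Hm [Hal [Hbe E]]]]]] | [_ Hy]]];
    try injection E as Ex Ey; cbn in *; try lra.
  - destruct r as [|r]; [rewrite Ex; apply Y1; auto |].
    pose proof (Y_ge1 q hq (S r) ltac:(lia)); lra.
  - pose proof (Y_nonneg q hq m ltac:(lia)); pose proof (Y_ge1 q hq (S m) ltac:(lia)); nra.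
Qed.

Lemma Lam_horizontal x : Lam q (x, 0) -> x = 1 \/ x = -1.
Proof.
  intros Hx; destruct (Lam_basic_shape q hq _ Hx) as [Sh | Sh].
  - left; apply basic_shape_horizontal; auto.
  - right; unfold vneg in Sh; cbn in Sh; rewrite Ropp_0 in Sh.
    apply basic_shape_horizontal in Sh; lra.
Qed.

(* [u], [u + lam q] and [u - lam q] are all first coordinates of lattice vectors;
   as [lam q < 2] they cannot all be [0] or of size at least 1 unless [u = 0]. *)
Lemma Lam_height1_fst u : Lam q (u, 1) -> - lam q < u < lam q -> u = 0.
Proof.
  intros Hu Hbd; pose proof (lam_lt2 q hq).
  assert (Hp : Lam q (u + lam q, 1)).
  { replace (u + lam q, 1) with (mapp (Tmat q) (u, 1)) by (mat_unfold; f_equal; ring).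
    apply Lam_mapp; auto; apply inG_T. }
  assert (Hm : Lam q (u - lam q, 1)).
  { replace (u - lam q, 1) with (mapp (Tinv q) (u, 1)) by (mat_unfold; f_equal; ring).
    apply Lam_mapp; auto; apply inG_Tinv. }
  apply Lam_fst_discrete in Hu, Hp, Hm; cbn in *.
  destruct Hu as [Hu | Hu]; auto; exfalso.
  revert Hu Hp Hm; unfold Rabs; repeat destruct Rcase_abs; intros; lra.
Qed.

Lemma same_lattice_gmat_fst a b c d : 0 < a -> 0 < c ->
  same_lattice q (gmat a b) (gmat c d) -> a = c.
Proof.
  intros Ha Hc HS.
  assert (H : ALam q (gmat a b) (a, 0))
    by (exists (1, 0); split; [apply Lam_e1 | mat_unfold; f_equal; ring]).
  apply HS in H as [[u1 u2] [Hu E]]; mat_unfold; injection E as E1 E2.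
  assert (u2 = 0).
  { apply (Rmult_eq_reg_l (/ c)); [lra | apply Rinv_neq_0_compat; lra]. }
  subst u2; destruct (Lam_horizontal u1 Hu); subst u1; nra.
Qed.

Lemma farey_rep_unique a b c d : inT q (a, b) -> inT q (c, d) ->
  same_lattice q (gmat a b) (gmat c d) -> (a, b) = (c, d).
Proof.
  intros [[Ha1 Ha2] [Hb1 Hb2]] [[Hc1 Hc2] [Hd1 Hd2]] HS; cbn in *.
  pose proof (same_lattice_gmat_fst a b c d Ha1 Hc1 HS); subst c.
  assert (H : ALam q (gmat a b) (b, / a)).
  { exists (mapp Smat (1, 0)); split; [apply Lam_S, Lam_e1 | mat_unfold; f_equal; ring]. }
  apply HS in H as [[u1 u2] [Hu E]]; mat_unfold; injection E as E1 E2.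
  assert (u2 = 1).
  { apply (Rmult_eq_reg_l (/ a)); [lra | apply Rinv_neq_0_compat; lra]. }
  subst u2; pose proof (lam_pos q hq).
  assert (u1 = 0) by (apply Lam_height1_fst; auto; split; nra).
  subst u1; f_equal; lra.
Qed.

Lemma farey_shift_inT c e : 0 < c <= 1 -> inT q (c, farey_shift q c e).
Proof.
  intros Hc; pose proof (lam_pos q hq).
  pose proof (Int_part_shift_bounds (lam q * c) e ltac:(nra)).
  unfold inT, farey_shift; cbn; rewrite Rmult_assoc; lra.
Qed.

Lemma same_lattice_farey_shift c e :
  same_lattice q (gmat c e) (gmat c (farey_shift q c e)).
Proof. apply same_lattice_gmat_shift. Qed.

Lemma farey_rep_exists A c : det A = 1 -> 0 < c <= 1 -> ALam q A (c, 0) ->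
  exists p, inT q p /\ same_lattice q A (gmat (fst p) (snd p)) /\ fst p = c.
Proof.
  intros HA Hc [u [[M [HM ->]] E]]; rewrite <- mapp_mmul in E; set (B := mmul A M) in *.
  assert (HB : det B = 1) by (unfold B; rewrite det_mmul, HA, (inG_det q M HM); ring).
  assert (E1 : m11 B = c) by (apply (f_equal fst) in E; unfold mapp in E; cbn [fst snd] in E; lra).
  assert (E2 : m21 B = 0) by (apply (f_equal snd) in E; unfold mapp in E; cbn [fst snd] in E; lra).
  exists (c, farey_shift q c (m12 B)); cbn; split; [|split]; auto.
  - apply farey_shift_inT; auto.
  - apply same_lattice_trans with B; [apply same_lattice_mmul_r; auto |].
    rewrite (gmat_of_det1 B HB E2), E1; apply same_lattice_farey_shift.
Qed.

Lemma farey_rep A c : det A = 1 -> 0 < c <= 1 -> ALam q A (c, 0) ->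
  exists p, inT q p /\ same_lattice q A (gmat (fst p) (snd p)) /\ fst p = c /\
    (forall p', inT q p' -> same_lattice q A (gmat (fst p') (snd p')) -> p' = p).
Proof.
  intros HA Hc H; destruct (farey_rep_exists A c HA Hc H) as [p [Hp [HS Hf]]].
  exists p; do 3 (split; auto); intros [c' d'] Hp' HS'; destruct p as [a b]; cbn in *.
  symmetry; apply farey_rep_unique; auto.
  apply same_lattice_trans with A; auto; apply same_lattice_sym; auto.
Qed.

End Farey.

(** * The pieces [T_i] and the BCZ map *)

Lemma first_crossing (f : nat -> R) n : f 1%nat > 1 -> (1 <= n)%nat -> f n <= 1 ->
  exists i, (2 <= i <= n)%nat /\ f (i - 1)%nat > 1 /\ f i <= 1.
Proof.
  intros H1; induction n as [|n IH]; intros Hn Hfn; [lia |].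
  destruct (Nat.eq_dec n 0) as [-> | Hn0]; [lra |].
  destruct (Rlt_dec 1 (f n)).
  - exists (S n); replace (S n - 1)%nat with n by lia; repeat split; auto; lia.
  - destruct IH as [i [Hi Hi']]; [lia | lra |]; exists i; split; auto; lia.
Qed.

Section Partition.
Variable q : nat.
Hypothesis hq : (3 <= q)%nat.

Definition wdot (a b : R) (k : nat) : R := a * Y q (S k) + b * Y q k.

Lemma dot_w a b k : dot (a, b) (w q k) = wdot a b k.
Proof. rewrite w_eq by auto; unfold dot, wdot; cbn; ring. Qed.

Lemma wdot_0 a b : wdot a b 0 = a.
Proof. unfold wdot; rewrite Y0, Y1 by auto; ring. Qed.

Lemma wdot_1 a b : wdot a b 1 = a * lam q + b.
Proof. unfold wdot; rewrite Y_rec, Y0, Y1 by auto; ring. Qed.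

Lemma wdot_q1 a b : wdot a b (q - 1) = b.
Proof. unfold wdot; replace (S (q - 1)) with q by lia; rewrite Y_q, Y_q1 by auto; ring. Qed.

Lemma wdot_rec a b n : wdot a b (S (S n)) = lam q * wdot a b (S n) - wdot a b n.
Proof. unfold wdot; rewrite (Y_rec q hq (S n)), (Y_rec q hq n); ring. Qed.

Lemma wdot_interp a b l k m : (l <= k <= m)%nat ->
  wdot a b k * Y q (m - l) = wdot a b l * Y q (m - k) + wdot a b m * Y q (k - l).
Proof.
  intros H; unfold wdot.
  pose proof (Y_interp q hq 1 l k m H) as H1; pose proof (Y_interp q hq 0 l k m H) as H0.
  rewrite !Nat.add_1_r in H1; rewrite !Nat.add_0_r in H0.
  transitivity (a * (Y q (S k) * Y q (m - l)) + b * (Y q k * Y q (m - l))); [ring |].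
  rewrite H1, H0; ring.
Qed.

(* Interpolating between indices [1] and [j]: [f_k Y_(j-1) = f_1 Y_(j-k) + f_j Y_(k-1)]
   with [Y_(j-1) <= Y_(j-k) + Y_(k-1)]. *)
Lemma wdot_gt1_between a b k j : inT q (a, b) -> (1 <= k <= j)%nat -> (j <= q)%nat ->
  wdot a b j > 1 -> wdot a b k > 1.
Proof.
  intros [[Ha1 Ha2] [Hb1 Hb2]] Hk Hj Hf; cbn in *.
  assert (F1 : wdot a b 1 > 1) by (rewrite wdot_1; lra).
  destruct (Nat.eq_dec j 1) as [-> | Hj1]; [replace k with 1%nat by lia; auto |].
  pose proof (wdot_interp a b 1 k j Hk) as E.
  pose proof (Y_ge1 q hq (j - 1) ltac:(lia)).
  pose proof (Y_nonneg q hq (j - k) ltac:(lia)); pose proof (Y_nonneg q hq (k - 1) ltac:(lia)).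
  pose proof (Y_subadd q hq (j - k) (k - 1) ltac:(lia)) as Hsub.
  replace (j - k + (k - 1))%nat with (j - 1)%nat in Hsub by lia.
  assert (wdot a b 1 * Y q (j - k) + wdot a b j * Y q (k - 1) > Y q (j - k) + Y q (k - 1)).
  { destruct (Rlt_dec 0 (Y q (j - k))); nra. }
  nra.
Qed.

Lemma wdot_pos_next a b j : inT q (a, b) -> (1 <= j <= q - 2)%nat ->
  wdot a b j > 1 -> 0 < wdot a b (S j).
Proof.
  intros [[Ha1 Ha2] _] Hj Hf; cbn in *.
  pose proof (wdot_interp a b 0 j (S j) ltac:(lia)) as E.
  rewrite wdot_0, Nat.sub_0_r, Nat.sub_0_r, Nat.sub_succ_l, Nat.sub_diag, Y1 in E by lia.
  pose proof (Y_ge1 q hq j ltac:(lia)); pose proof (Y_ge1 q hq (S j) ltac:(lia)); nra.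
Qed.

Lemma wdot_ratio_mono a b i r : 0 <= a -> (i <= r <= q)%nat ->
  Y q i * wdot a b r <= Y q r * wdot a b i.
Proof.
  intros Ha Hr; pose proof (wdot_interp a b 0 i r ltac:(lia)) as E.
  rewrite wdot_0, !Nat.sub_0_r in E.
  pose proof (Y_nonneg q hq (r - i) ltac:(lia)); nra.
Qed.

Lemma farey_partition_exists a b : inT q (a, b) ->
  exists i, (2 <= i <= q - 1)%nat /\ inTi q i (a, b).
Proof.
  intros HT; pose proof HT as [[Ha1 Ha2] [Hb1 Hb2]]; cbn in *.
  destruct (first_crossing (wdot a b) (q - 1)) as [i [Hi [Hi1 Hi2]]].
  - rewrite wdot_1; lra.
  - lia.
  - rewrite wdot_q1; lra.
  - exists i; split; [lia |]; unfold inTi; rewrite !dot_w; auto.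
Qed.

Lemma farey_partition_unique i j a b : (2 <= i <= q - 1)%nat -> (2 <= j <= q - 1)%nat ->
  inTi q i (a, b) -> inTi q j (a, b) -> i = j.
Proof.
  intros Hi Hj [HT [Hi1 Hi2]] [_ [Hj1 Hj2]]; rewrite !dot_w in *.
  destruct (Nat.lt_total i j) as [L | [L | L]]; auto; exfalso.
  - pose proof (wdot_gt1_between a b i (j - 1) HT ltac:(lia) ltac:(lia) Hj1); lra.
  - pose proof (wdot_gt1_between a b j (i - 1) HT ltac:(lia) ltac:(lia) Hi1); lra.
Qed.

End Partition.

Lemma is_min_slope_unique q a b r1 r2 :
  is_min_slope q a b r1 -> is_min_slope q a b r2 -> r1 = r2.
Proof.
  intros [v1 [H1 [H2 [H3 [<- H5]]]]] [v2 [G1 [G2 [G3 [<- G5]]]]].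
  pose proof (H5 v2 G1 G2 G3); pose proof (G5 v1 H1 H2 H3); lra.
Qed.

Lemma Rq_eq q a b r : is_min_slope q a b r -> Rq q a b = r.
Proof.
  intros H; apply (is_min_slope_unique q a b); auto.
  unfold Rq; apply epsilon_spec; exists r; auto.
Qed.

Lemma BCZ_eq q (hq : (3 <= q)%nat) a b p : inT q p ->
  same_lattice q (mmul (hmat (Rq q a b)) (gmat a b)) (gmat (fst p) (snd p)) ->
  BCZ q a b = p.
Proof.
  intros Hp HS.
  assert (Hspec : inT q (BCZ q a b) /\ same_lattice q (mmul (hmat (Rq q a b)) (gmat a b))
                    (gmat (fst (BCZ q a b)) (snd (BCZ q a b))))
    by (unfold BCZ; apply epsilon_spec; exists p; auto).
  destruct Hspec as [HB HSB]; destruct (BCZ q a b) as [x y], p as [c d]; cbn in *.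
  apply (farey_rep_unique q hq); auto.
  apply same_lattice_trans with (mmul (hmat (Rq q a b)) (gmat a b)); auto.
  apply same_lattice_sym; auto.
Qed.

Lemma slope_short_horizontal q A v : ALam q A v -> strip 1 v ->
  has_short_horizontal q (mmul (hmat (slope v)) A).
Proof.
  intros [u [Hu ->]] Hs; unfold strip, slope in *; exists (fst (mapp A u)); split.
  - rewrite Rabs_right; lra.
  - exists u; split; auto; rewrite mapp_mmul; destruct (mapp A u) as [x y]; cbn in *.
    mat_unfold; f_equal; [ring | field; lra].
Qed.

Lemma short_horizontal_slope q A s : has_short_horizontal q (mmul (hmat s) A) ->
  exists v, ALam q A v /\ strip 1 v /\ slope v = s.
Proof.
  intros [x [Hx [u [Hu E]]]]; rewrite mapp_mmul in E.
  destruct (mapp A u) as [X Y'] eqn:EA; mat_unfold; injection E as E1 E2.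
  assert (Hx0 : x <> 0) by (intro Hz; rewrite Hz, Rabs_R0 in Hx; lra).
  assert (HY : Y' = s * X) by lra.
  destruct (Rlt_dec 0 x).
  - exists (X, Y'); split; [exists u; auto | split].
    + unfold strip; cbn; rewrite Rabs_right in Hx; lra.
    + unfold slope; cbn; rewrite HY; field; lra.
  - exists (vneg (X, Y')); split.
    + exists (vneg u); rewrite mapp_vneg, EA; split; auto; apply Lam_vneg; auto.
    + unfold strip, slope, vneg; cbn; rewrite Rabs_left in Hx by lra; split; [lra |].
      rewrite HY; field; lra.
Qed.

Lemma min_slope_horizontal q a b r : is_min_slope q a b r ->
  0 < r /\ has_short_horizontal q (mmul (hmat r) (gmat a b)) /\
  (forall s, 0 < s < r -> ~ has_short_horizontal q (mmul (hmat s) (gmat a b))).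
Proof.
  intros [v [Hv [Hs [Hpos [<- Hmin]]]]]; split; [auto | split].
  - apply slope_short_horizontal; auto.
  - intros s Hs' Hh; destruct (short_horizontal_slope q _ s Hh) as [u [Hu [Hus <-]]].
    pose proof (Hmin u Hu Hus ltac:(lra)); lra.
Qed.

Section Piece.
Variable q : nat.
Hypothesis hq : (3 <= q)%nat.
Variables (a b : R) (i : nat).
Hypothesis Hi : (2 <= i <= q - 1)%nat.
Hypothesis HTi : inTi q i (a, b).

Local Notation f := (wdot q a b).

Lemma piece_inT : inT q (a, b). Proof. apply HTi. Qed.
Lemma piece_a_pos : 0 < a. Proof. apply piece_inT. Qed.

Lemma piece_prev_gt1 : f (i - 1)%nat > 1.
Proof. destruct HTi as [_ [H _]]; rewrite dot_w in H; auto. Qed.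

Lemma piece_le1 : f i <= 1.
Proof. destruct HTi as [_ [_ H]]; rewrite dot_w in H; auto. Qed.

Lemma piece_pos : 0 < f i.
Proof.
  replace i with (S (i - 1)) by lia.
  apply wdot_pos_next; [auto | apply piece_inT | lia | apply piece_prev_gt1].
Qed.

Lemma piece_gt1_before k : (1 <= k <= i - 1)%nat -> f k > 1.
Proof.
  intros Hk; apply (wdot_gt1_between q hq a b k (i - 1));
    [apply piece_inT | lia | lia | apply piece_prev_gt1].
Qed.

Lemma basic_shape_slope_bound v : basic_shape q v -> 0 < snd v ->
  0 < dot (a, b) v <= 1 -> Y q i * dot (a, b) v <= snd v * f i.
Proof.
  pose proof piece_a_pos; pose proof piece_pos; pose proof piece_le1.
  pose proof (Y_ge1 q hq i ltac:(lia)).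
  intros [[r [Hr ->]] | [[m [al [be [Hm [Hal [Hbe ->]]]]]] | [Hx Hy]]] Hs Hd;
    unfold dot in *; cbn in *.
  - replace (a * Y q (S r) + b * Y q r) with (f r) in * by reflexivity.
    destruct (Compare_dec.le_lt_dec i r).
    + pose proof (wdot_ratio_mono q hq a b i r ltac:(lra) ltac:(lia)); lra.
    + destruct r as [|r]; [rewrite Y0 in Hs by auto; lra |].
      pose proof (piece_gt1_before (S r) ltac:(lia)); lra.
  - replace (a * (al * Y q (S m) + be * Y q (S (S m))) + b * (al * Y q m + be * Y q (S m)))
      with (al * f m + be * f (S m)) in * by (unfold wdot; ring).
    destruct (Compare_dec.le_lt_dec i m).
    + pose proof (wdot_ratio_mono q hq a b i m ltac:(lra) ltac:(lia)).
      pose proof (wdot_ratio_mono q hq a b i (S m) ltac:(lra) ltac:(lia)).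
      nra.
    + exfalso; assert (HfS : 0 < f (S m)).
      { destruct (Nat.eq_dec (S m) i) as [-> | E]; [lra |].
        pose proof (piece_gt1_before (S m) ltac:(lia)); lra. }
      destruct m as [|m].
      * pose proof (piece_gt1_before 1 ltac:(lia)); rewrite wdot_0 in Hd by auto; nra.
      * pose proof (piece_gt1_before (S m) ltac:(lia)); nra.
  - unfold wdot.
    pose proof (Y_nonneg q hq (S i) ltac:(lia)); pose proof (Y_nonneg q hq i ltac:(lia)).
    assert (0 <= snd v * (a * Y q (S i))) by (apply Rmult_le_pos; nra).
    assert (0 <= Y q i * a * (- fst v)) by (apply Rmult_le_pos; nra).
    nra.
Qed.

Lemma Lam_slope_bound u : Lam q u -> 0 < snd u -> 0 < dot (a, b) u <= 1 ->
  Y q i * dot (a, b) u <= snd u * f i.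
Proof.
  intros Hu Hs Hd; destruct (Lam_basic_shape q hq u Hu) as [Sh | Sh].
  - apply basic_shape_slope_bound; auto.
  - exfalso; destruct (basic_shape_snd q hq _ Sh); unfold vneg in *; cbn in *; lra.
Qed.

Lemma least_slope_vector : let v := mapp (gmat a b) (w q i) in
  (ALam q (gmat a b) v /\ strip 1 v /\ 0 < slope v /\
   (forall u, ALam q (gmat a b) u -> strip 1 u -> 0 < slope u -> slope v <= slope u)).
Proof.
  pose proof piece_a_pos; pose proof piece_pos; pose proof piece_le1.
  pose proof (Y_ge1 q hq i ltac:(lia)); assert (0 < / a) by (apply Rinv_0_lt_compat; auto).
  intro v; assert (Ev : v = (f i, / a * Y q i))
    by (unfold v; rewrite mapp_gmat, dot_w, w_eq by auto; auto).
  clearbody v; subst v; split; [| split; [unfold strip; cbn; lra | split]].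
  - exists (w q i); split; [apply Lam_w | rewrite mapp_gmat, dot_w, w_eq by auto; auto].
  - unfold slope; cbn; apply Rdiv_lt_0_compat; nra.
  - intros u [u0 [Hu0 ->]]; rewrite mapp_gmat; unfold strip; cbn; intros Hs Hsl.
    assert (Hu2 : 0 < snd u0).
    { unfold slope in Hsl; cbn in Hsl.
      assert (0 < / a * snd u0) by (apply Rdiv_pos_cases in Hsl; destruct Hsl; lra). nra. }
    apply slope_le_cross; cbn; try lra.
    pose proof (Lam_slope_bound u0 Hu0 Hu2 Hs); nra.
Qed.

Lemma min_slope_piece : is_min_slope q a b (Y q i / (a * f i)).
Proof.
  pose proof piece_a_pos; pose proof piece_pos.
  destruct least_slope_vector as [Hv [Hs [Hpos Hmin]]].
  assert (Hsl : slope (mapp (gmat a b) (w q i)) = Y q i / (a * f i))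
    by (rewrite mapp_gmat, dot_w, w_eq by auto; unfold slope; cbn; field; lra).
  exists (mapp (gmat a b) (w q i)); rewrite <- Hsl; auto.
Qed.

Lemma Rq_piece : Rq q a b = Y q i / (a * f i).
Proof. apply Rq_eq, min_slope_piece. Qed.

(* The determinant is 1 and the choice of [Rq] kills the lower-left entry. *)
Lemma hmat_gmat_Upow :
  mmul (hmat (Rq q a b)) (mmul (gmat a b) (mpow (Umat q) i)) = gmat (f i) (- f (i - 1)%nat).
Proof.
  pose proof piece_a_pos; pose proof piece_pos.
  assert (EU : mpow (Umat q) i = Mat (Y q (S i)) (- Y q i) (Y q i) (- Y q (i - 1)%nat)).
  { replace i with (S (i - 1)) at 1 by lia; rewrite Upow_S by auto.
    replace (S (i - 1)) with i by lia; auto. }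
  set (B := mmul _ _).
  assert (HB : det B = 1).
  { unfold B; rewrite !det_mmul, (inG_det q _ (inG_Upow q i)); mat_unfold; field; lra. }
  assert (E21 : m21 B = 0).
  { unfold B; rewrite EU, Rq_piece; mat_unfold; unfold wdot; field; unfold wdot in H0; split; lra. }
  rewrite (gmat_of_det1 B HB E21); unfold B; rewrite EU; f_equal; mat_unfold; unfold wdot.
  - ring.
  - replace (S (i - 1)) with i by lia; ring.
Qed.

Lemma same_lattice_BCZ_piece : same_lattice q (mmul (hmat (Rq q a b)) (gmat a b))
  (gmat (f i) (farey_shift q (f i) (f (S i)))).
Proof.
  eapply same_lattice_trans; [apply same_lattice_mmul_r, (inG_Upow q i) |].
  rewrite <- mmul_assoc, hmat_gmat_Upow.
  eapply same_lattice_trans; [apply (same_lattice_gmat_shift q _ _ 1) |].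
  replace (- f (i - 1)%nat + IZR 1 * lam q * f i) with (f (S i)).
  - apply same_lattice_farey_shift.
  - replace i with (S (i - 1)) at 1 3 by lia; rewrite wdot_rec by auto.
    replace (S (i - 1)) with i by lia; cbn; ring.
Qed.

Lemma BCZ_piece : BCZ q a b = (f i, farey_shift q (f i) (f (S i))).
Proof.
  pose proof piece_pos; pose proof piece_le1.
  apply BCZ_eq; [auto | apply farey_shift_inT; auto; lra | apply same_lattice_BCZ_piece].
Qed.

Lemma piece_min_slope_BCZ :
  let v := mapp (gmat a b) (w q i) in
  (ALam q (gmat a b) v /\ strip 1 v /\ 0 < slope v /\
   (forall u, ALam q (gmat a b) u -> strip 1 u -> 0 < slope u -> slope v <= slope u)) /\
  Rq q a b = snd (w q i) / (a * dot (a, b) (w q i)) /\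
  BCZ q a b =
    (dot (a, b) (w q i),
     dot (a, b) (w q (i + 1)) +
     IZR (Int_part ((1 - dot (a, b) (w q (i + 1))) / (lam q * dot (a, b) (w q i))))
       * lam q * dot (a, b) (w q i)).
Proof.
  split; [apply least_slope_vector | split].
  - rewrite Rq_piece, dot_w, w_eq by auto; auto.
  - rewrite BCZ_piece, !dot_w, Nat.add_1_r by auto; auto.
Qed.

End Piece.

Lemma BCZ_well_defined q (hq : (3 <= q)%nat) a b : inT q (a, b) ->
  (exists v, ALam q (gmat a b) v /\ strip 1 v) /\
  is_min_slope q a b (Rq q a b) /\ 0 < Rq q a b /\
  has_short_horizontal q (mmul (hmat (Rq q a b)) (gmat a b)) /\
  (forall s, 0 < s < Rq q a b -> ~ has_short_horizontal q (mmul (hmat s) (gmat a b))) /\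
  inT q (BCZ q a b) /\
  same_lattice q (mmul (hmat (Rq q a b)) (gmat a b)) (gmat (fst (BCZ q a b)) (snd (BCZ q a b))).
Proof.
  intros HT; destruct (farey_partition_exists q hq a b HT) as [i [Hi HTi]].
  pose proof (min_slope_piece q hq a b i Hi HTi) as Hmin.
  rewrite <- (Rq_eq q a b _ Hmin) in Hmin.
  destruct (min_slope_horizontal q a b _ Hmin) as [Hpos [Hshort Hnone]].
  pose proof (piece_pos q hq a b i Hi HTi); pose proof (piece_le1 q hq a b i HTi).
  rewrite (BCZ_piece q hq a b i Hi HTi); cbn.
  split; [destruct Hmin as [v [Hv [Hs _]]]; exists v; auto |].
  do 4 (split; auto); split; [apply farey_shift_inT; auto; lra |].
  apply same_lattice_BCZ_piece; auto.
Qed.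

Theorem mainTheorem5 (q : nat) (hq : (3 <= q)%nat) :
  (forall (A : mat) (c : R), det A = 1 -> 0 < c <= 1 -> ALam q A (c, 0) ->
     exists p : vec, inT q p /\ same_lattice q A (gmat (fst p) (snd p)) /\
       fst p = c /\
       (forall p' : vec, inT q p' -> same_lattice q A (gmat (fst p') (snd p')) -> p' = p)) /\
  (forall a b c d : R, inT q (a, b) -> inT q (c, d) ->
     same_lattice q (gmat a b) (gmat c d) -> (a, b) = (c, d)) /\
  (forall a b : R, inT q (a, b) ->
     (exists v, ALam q (gmat a b) v /\ strip 1 v) /\
     is_min_slope q a b (Rq q a b) /\ 0 < Rq q a b /\
     has_short_horizontal q (mmul (hmat (Rq q a b)) (gmat a b)) /\
     (forall s, 0 < s < Rq q a b -> ~ has_short_horizontal q (mmul (hmat s) (gmat a b))) /\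
     inT q (BCZ q a b) /\
     same_lattice q (mmul (hmat (Rq q a b)) (gmat a b))
       (gmat (fst (BCZ q a b)) (snd (BCZ q a b)))) /\
  (forall a b : R, inT q (a, b) ->
     exists i : nat, (2 <= i <= q - 1)%nat /\ inTi q i (a, b)) /\
  (forall (i j : nat) (a b : R), (2 <= i <= q - 1)%nat -> (2 <= j <= q - 1)%nat ->
     inTi q i (a, b) -> inTi q j (a, b) -> i = j) /\
  (forall (i : nat) (a b : R), (2 <= i <= q - 1)%nat -> inTi q i (a, b) ->
     let v := mapp (gmat a b) (w q i) in
     (ALam q (gmat a b) v /\ strip 1 v /\ 0 < slope v /\
      (forall u, ALam q (gmat a b) u -> strip 1 u -> 0 < slope u -> slope v <= slope u)) /\
     Rq q a b = snd (w q i) / (a * dot (a, b) (w q i)) /\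
     BCZ q a b =
       (dot (a, b) (w q i),
        dot (a, b) (w q (i + 1)) +
        IZR (Int_part ((1 - dot (a, b) (w q (i + 1))) / (lam q * dot (a, b) (w q i))))
          * lam q * dot (a, b) (w q i))).
Proof.
  split; [exact (farey_rep q hq) |].
  split; [exact (farey_rep_unique q hq) |].
  split; [exact (BCZ_well_defined q hq) |].
  split; [exact (farey_partition_exists q hq) |].
  split; [exact (farey_partition_unique q hq) |].
  intros i a b Hi HTi; exact (piece_min_slope_BCZ q hq a b i Hi HTi).
Qed.
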